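(* Let $(Q,\mathcal Q)$ and $(\Delta,\mathcal D)$ be measurable spaces and $f:Q\to Q$, $g:Q\to\Delta$ measurable maps. Consider the generator $[(Q,\mathcal Q),T,(\Delta,\mathcal D)]$ defined by $T(x,\cdot):=\delta_{(f(x),\,g(f(x)))}$, i.e. $T(x,A\times B)=1$ if $f(x)\in A$ and $g(f(x))\in B$, and $0$ otherwise. Then $$\sigma_Q(T)=\sigma(g\circ f,\,g\circ f^2,\,g\circ f^3,\dots),$$ the $\sigma$-algebra on $Q$ generated by the maps $g\circ f^k$, $k\ge1$.
   Context: A generator $[(Q,\mathcal Q),T,(\Delta,\mathcal D)]$ consists of measurable spaces $(Q,\mathcal Q)$ and $(\Delta,\mathcal D)$ and a Markov transition kernel $T$ from $(Q,\mathcal Q)$ to $(Q\times\Delta,\mathcal Q\otimes\mathcal D)$. For such a generator, $\sigma_Q(T)$ denotes the smallest $\sigma$-subalgebra $\mathcal A$ of $\mathcal Q$ such that for every $C\in\mathcal A\otimes\mathcal D$ the function $x\mapsto T(x,C)$ is $\mathcal A$-measurable (equivalently, the intersection of all $\sigma$-subalgebras of $\mathcal Q$ with this property). *)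

From HB Require Import structures.
From mathcomp Require Import all_boot all_order all_algebra.
From mathcomp Require Import all_classical all_reals all_analysis.
From mathcomp Require Import measurable_realfun.
Set Implicit Arguments. Unset Strict Implicit. Unset Printing Implicit Defensive.
Import Order.TTheory GRing.Theory Num.Theory.
Local Open Scope classical_set_scope.
Local Open Scope ring_scope.

Definition measurable_wrt (Q : Type) (R : realType) (A : set (set Q))
  (h : Q -> \bar R) : Prop :=
  forall B : set (\bar R), measurable B -> A (h @^-1` B).

Definition prod_sigma (Q : Type) (dD : measure_display) (Dl : measurableType dD)
  (A : set (set Q)) : set (set (Q * Dl)) :=
  <<s [set C | exists X Y, A X /\ measurable Y /\ C = X `*` Y] >>.

Definition sigmaQ_admissible (dQ dD : measure_display) (Q : measurableType dQ)
  (Dl : measurableType dD) (R : realType) (T : Q -> set (Q * Dl) -> \bar R)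
  (A : set (set Q)) : Prop :=
  [/\ sigma_algebra setT A, A `<=` measurable &
      forall C, @prod_sigma Q dD Dl A C -> measurable_wrt A (fun x => T x C)].

Definition sigmaQ (dQ dD : measure_display) (Q : measurableType dQ)
  (Dl : measurableType dD) (R : realType) (T : Q -> set (Q * Dl) -> \bar R)
  : set (set Q) :=
  [set B | forall A, sigmaQ_admissible T A -> A B].

Definition dirac_gen (dQ dD : measure_display) (Q : measurableType dQ)
  (Dl : measurableType dD) (R : realType) (f : Q -> Q) (g : Q -> Dl)
  : Q -> set (Q * Dl) -> \bar R :=
  fun x C => @dirac _ _ (f x, g (f x)) R C.

Definition sigma_iter (dQ dD : measure_display) (Q : measurableType dQ)
  (Dl : measurableType dD) (f : Q -> Q) (g : Q -> Dl) : set (set Q) :=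
  <<s [set S | exists k : nat, exists B : set Dl,
         (0 < k)%N /\ measurable B /\ S = (g \o iter k f) @^-1` B] >>.

From HB Require Import structures.
From mathcomp Require Import all_boot all_order all_algebra.
From mathcomp Require Import all_classical all_reals all_analysis.
From mathcomp Require Import measurable_realfun.
Local Open Scope classical_set_scope.
Local Open Scope ring_scope.
Import GRing.Theory Num.Theory.

(* Since T(x, .) is the Dirac mass at h x := (f x, g (f x)), the kernel
   condition for a sigma-subalgebra A says exactly that h is measurable from
   A to A (x) D, i.e. that f^-1 A and (g o f)^-1 D lie in A.  The first
   condition makes A closed under f-preimages, so by induction every
   (g o f^(k+1))^-1 D lies in A; conversely the sigma-algebra generated by
   the g o f^k, k >= 1, is closed under f-preimages, hence satisfies the
   kernel condition itself. *)

Section sigma_algebra_closure.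
Context {T : Type} {A : set (set T)} (sA : sigma_algebra setT A).

Lemma sigma_algebra_setT : A setT.
Proof. by have [] := (sigma_algebraP (fun X _ => @subsetT _ X)).1 sA. Qed.

Lemma sigma_algebra_setC X : A X -> A (~` X).
Proof. by rewrite -setTD; case: sA => _ + _; apply. Qed.

Lemma sigma_algebra_setI X Y : A X -> A Y -> A (X `&` Y).
Proof. by have [_ _ _] := (sigma_algebraP (fun X _ => @subsetT _ X)).1 sA; apply. Qed.

End sigma_algebra_closure.

Lemma measurable_wrt_indic {T : Type} (R : realType) {A : set (set T)}
    (S : set T) : sigma_algebra setT A ->
  measurable_wrt A (fun x => (\1_S x : R)%:E) <-> A S.
Proof.
move=> sA; split => [mS|AS B _].
  suff <- : (fun x => (\1_S x : R)%:E) @^-1` [set 1%:E] = S.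
    exact/mS/emeasurable_set1.
  apply/seteqP; split => x /=; rewrite indicE.
    by case: (boolP (x \in S)) => [/set_mem //|_] [] /eqP; rewrite eq_sym oner_eq0.
  by move=> /mem_set ->.
rewrite -[_ @^-1` _]/(\1_S @^-1` (EFin @^-1` B)) preimage_indic.
case: ifP => _; case: ifP => _ //.
- exact: sigma_algebra_setT.
- exact: sigma_algebra_setC.
- by case: sA.
Qed.

Lemma prod_sigma_preimage (T U : Type) (dD : measure_display)
    (Dl : measurableType dD) (S : set (set T)) (B : set (set U))
    (u : T -> U) (v : T -> Dl) : sigma_algebra setT S ->
  (forall X, B X -> S (u @^-1` X)) -> (forall Y, measurable Y -> S (v @^-1` Y)) ->
  forall C, prod_sigma B C -> S ((fun x => (u x, v x)) @^-1` C).
Proof.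
move=> sS uS vS C BC; rewrite -[_ @^-1` C]setTI.
apply: (smallest_sub (sigma_algebra_image _ sS) _ BC).
move=> _ [X [Y [BX [mY ->]]]]; rewrite /image_set_system /= setTI.
rewrite -[_ @^-1` _]/(u @^-1` X `&` v @^-1` Y).
by apply: (sigma_algebra_setI sS); [exact: uS | exact: vS].
Qed.

Section dirac_generator.
Context (dQ dD : measure_display) (Q : measurableType dQ)
  (Dl : measurableType dD) (R : realType) (f : Q -> Q) (g : Q -> Dl).

Lemma dirac_genE C : (fun x => dirac_gen R f g x C) =
  (fun x => (\1_((fun y => (f y, g (f y))) @^-1` C) x)%:E).
Proof. by apply: funext => x; rewrite /dirac_gen diracE indicE. Qed.

Lemma sigmaQ_admissible_dirac_gen {A : set (set Q)} : sigma_algebra setT A ->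
  (forall C, prod_sigma A C -> measurable_wrt A (fun x => dirac_gen R f g x C))
  <-> (forall C, prod_sigma A C -> A ((fun y => (f y, g (f y))) @^-1` C)).
Proof.
move=> sA; split=> kA C /kA; rewrite dirac_genE.
- exact: (measurable_wrt_indic _ _ sA).1.
- exact: (measurable_wrt_indic _ _ sA).2.
Qed.

Lemma sigma_iter_preimage X : sigma_iter f g X -> sigma_iter f g (f @^-1` X).
Proof.
move=> iterX; rewrite -[_ @^-1` X]setTI.
apply: (smallest_sub (sigma_algebra_image f (smallest_sigma_algebra _ _)) _ iterX).
move=> _ [k [Y [k0 [mY ->]]]]; rewrite /image_set_system /= setTI.
apply: sub_sigma_algebra; exists k.+1, Y; do 2?split => //.
by apply: funext => x /=; rewrite -iterSr.
Qed.

Lemma sigma_iter_admissible : measurable_fun setT f -> measurable_fun setT g ->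
  sigmaQ_admissible (dirac_gen R f g) (sigma_iter f g).
Proof.
move=> mf mg; have sS : sigma_algebra setT (sigma_iter f g).
  exact: smallest_sigma_algebra.
split => //.
- apply: smallest_sub; first exact: sigma_algebra_measurable.
  move=> _ [k [Y [_ [mY ->]]]]; rewrite -[_ @^-1` _]setTI.
  by apply: (measurableT_comp mg _) => //; elim: k => [|k IHk] /=;
    [exact: measurable_id|exact: measurableT_comp].
- apply/(sigmaQ_admissible_dirac_gen sS).
  apply: prod_sigma_preimage => // [X|Y mY]; first exact: sigma_iter_preimage.
  by apply: sub_sigma_algebra; exists 1%N, Y.
Qed.

Lemma sigma_iter_sub A : sigmaQ_admissible (dirac_gen R f g) A ->
  sigma_iter f g `<=` A.
Proof.
move=> [sA _ /(sigmaQ_admissible_dirac_gen sA) kA].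
have rectA X Y : A X -> measurable Y -> A (f @^-1` X `&` (g \o f) @^-1` Y).
  by move=> AX mY; apply: (kA (X `*` Y)); apply: sub_sigma_algebra; exists X, Y.
have iterA n Y : measurable Y -> A ((g \o iter n.+1 f) @^-1` Y).
  elim: n Y => [|n IHn] Y mY.
    by have := rectA _ _ (sigma_algebra_setT sA) mY; rewrite preimage_setT setTI.
  have := rectA _ _ (IHn Y mY) measurableT; rewrite preimage_setT setIT.
  by congr A; apply: funext => x /=; rewrite -iterSr.
apply: smallest_sub => // _ [[|k] [Y [k0 [mY ->]]]] //; exact: iterA.
Qed.

End dirac_generator.

Theorem theorem4p2 (dQ dD : measure_display) (Q : measurableType dQ)
  (Dl : measurableType dD) (R : realType) (f : Q -> Q) (g : Q -> Dl)
  (mf : measurable_fun setT f) (mg : measurable_fun setT g) :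
  sigmaQ (dirac_gen R f g) = sigma_iter f g.
Proof.
apply/seteqP; split => [B |B iterB A admA].
- by apply; exact: sigma_iter_admissible.
- exact: sigma_iter_sub admA _ iterB.
Qed.
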